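(* For all integers $n,k\ge1$, $$\frac{L_3(k)}{n^{(2k+1)/2}}<\sum_{t=k}^\infty\frac{g_{o,1}(t)}{n^{(2t+1)/2}}<\frac{U_3(k)}{n^{(2k+1)/2}},$$ where $L_3(k)=\left(\frac{19}{10}\alpha\sinh\alpha-\frac{109}{10}\cosh\alpha\sqrt{k+1}-\frac{23}{10\sqrt{k+1}}\right)24^{-(2k+1)/2}$ and $U_3(k)=\left(2\alpha\sinh\alpha+\frac{33}{10\sqrt{k+1}}\right)24^{-(2k+1)/2}$.
   Context: $\alpha=\pi/6$. $(a)_m=a(a+1)\cdots(a+m-1)$ is the rising factorial ($(a)_0=1$); $\binom{x}{m}=x(x-1)\cdots(x-m+1)/m!$ for $m\ge1$, $\binom{x}{0}=1$. For $t\ge2$, $$S_3(t)=\sum_{s=1}^t\frac{(1/2-s)_{s+1}\binom{-3/2}{t-s}}{s}\sum_{u=1}^s\frac{(-1)^u(-s)_u}{(s+u)!\,(2u-1)!}\left(\frac{\pi^2}{36}\right)^u,$$ and $g_{o,1}(t)=-\frac{6}{\pi\sqrt{24}}\frac{(-1)^t}{24^t}\left(\binom{-3/2}{t}+S_3(t)\right)$ for $t\ge2$, $g_{o,1}(1)=-\frac{432+\pi^2}{2304\sqrt6\,\pi}$, $g_{o,1}(0)=-\frac{6}{\pi\sqrt{24}}$. *)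

From Stdlib Require Import Reals List Arith Factorial.
From Coquelicot Require Import Coquelicot.
Import ListNotations.
Open Scope R_scope.

(* sum_{i=a}^{b} f i  (empty if b < a) *)
Definition sum_from_to (f : nat -> R) (a b : nat) : R :=
  fold_right Rplus 0 (map f (seq a (S b - a))).

Definition rising (a : R) (m : nat) : R :=
  fold_right Rmult 1 (map (fun i => a + INR i) (seq 0 m)).

Definition gbinom (x : R) (m : nat) : R :=
  fold_right Rmult 1 (map (fun i => x - INR i) (seq 0 m)) / INR (fact m).

Definition alpha : R := PI / 6.

Definition S3 (t : nat) : R :=
  sum_from_to (fun s =>
    rising (1/2 - INR s) (S s) * gbinom (-3/2) (t - s) / INR s *
    sum_from_to (fun u =>
      (-1) ^ u * rising (- INR s) u / (INR (fact (s + u)) * INR (fact (2 * u - 1)))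
      * (PI ^ 2 / 36) ^ u) 1 s) 1 t.

Definition g_o1 (t : nat) : R :=
  match t with
  | O => - 6 / (PI * sqrt 24)
  | S O => - (432 + PI ^ 2) / (2304 * sqrt 6 * PI)
  | _ => - 6 / (PI * sqrt 24) * ((-1) ^ t / 24 ^ t) * (gbinom (-3/2) t + S3 t)
  end.

Definition halfpow (x : R) (t : nat) : R := Rpower x ((2 * INR t + 1) / 2).

Definition L3 (k : nat) : R :=
  (19/10 * alpha * sinh alpha - 109/10 * cosh alpha * sqrt (INR k + 1)
   - 23 / (10 * sqrt (INR k + 1))) / halfpow 24 k.

Definition U3 (k : nat) : R :=
  (2 * alpha * sinh alpha + 33 / (10 * sqrt (INR k + 1))) / halfpow 24 k.

From Stdlib Require Import Reals List Lra Lia Factorial.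
From Coquelicot Require Import Coquelicot.
Open Scope R_scope.

(* For [t >= 2], [g_o1 t = - K 24^-t (b_t + Q_t)] with [K = 6 / (pi sqrt 24)],
   [b_t = (3/2)_t / t!] and [Q_t = (-1)^t S_3(t)] a sum of nonnegative terms.
   Since [b_(t+1)^2 / b_t^2 <= (2t+3)/(2t+1)] we get [b_t <= sqrt (2t+1)], and
   [Q_t <= sqrt (2t+1) sum_s c_s / s <= sqrt (2t+1)] with [c_s = (1/2)_s / s!]
   by telescoping; the inner sums over [u] are at most [1/s!].  Hence
   [-2K sqrt (2t+1) 24^-t <= g_o1 t < 0] (also for [t = 1]).  The series is
   therefore negative, giving the upper bound as [U_3(k) > 0], and dominated by
   a geometric series of ratio [1/12], whose sum lies above [L_3(k) n^-(2k+1)/2]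
   thanks to the term [-109/10 cosh(alpha) sqrt (k+1)]. *)

Definition prod_upto (f : nat -> R) (m : nat) : R :=
  fold_right Rmult 1 (map f (seq 0 m)).

Lemma prod_upto_S f m : prod_upto f (S m) = prod_upto f m * f m.
Proof.
  unfold prod_upto. rewrite seq_S, map_app, fold_right_app. simpl.
  induction (map f (seq 0 m)) as [|x l IH]; simpl; [ring | rewrite IH; ring].
Qed.

Lemma prod_upto_shift f m : prod_upto f (S m) = f 0%nat * prod_upto (fun i => f (S i)) m.
Proof. unfold prod_upto. simpl. rewrite <- seq_shift, map_map. reflexivity. Qed.

Lemma prod_upto_ext f g m : (forall i, f i = g i) -> prod_upto f m = prod_upto g m.
Proof. intros H. unfold prod_upto. rewrite (map_ext f g H). reflexivity. Qed.

Lemma prod_upto_opp f m : (-1) ^ m * prod_upto f m = prod_upto (fun i => - f i) m.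
Proof.
  induction m as [|m IH]; [unfold prod_upto; simpl; ring|].
  rewrite !prod_upto_S, <- IH. simpl. ring.
Qed.

Lemma prod_upto_bound f c m :
  (forall i, (i < m)%nat -> 0 <= f i <= c) -> 0 <= prod_upto f m <= c ^ m.
Proof.
  induction m as [|m IH]; intros Hf; [unfold prod_upto; simpl; lra|].
  rewrite prod_upto_S. simpl.
  destruct (Hf m (Nat.lt_succ_diag_r m)) as [Hm1 Hm2].
  destruct IH as [IH1 IH2]; [intros i Hi; apply Hf; lia|].
  split; [apply Rmult_le_pos; lra|].
  rewrite Rmult_comm. apply Rmult_le_compat; lra.
Qed.

Lemma fold_right_Rplus_le (f g : nat -> R) (l : list nat) :
  (forall x, In x l -> f x <= g x) ->
  fold_right Rplus 0 (map f l) <= fold_right Rplus 0 (map g l).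
Proof.
  induction l as [|x l IH]; intros H; simpl; [lra|].
  apply Rplus_le_compat; [apply H; left | apply IH; intros y Hy; apply H; right]; auto.
Qed.

Lemma sum_from_to_le f g a b :
  (forall i, (a <= i <= b)%nat -> f i <= g i) -> sum_from_to f a b <= sum_from_to g a b.
Proof. intros H. apply fold_right_Rplus_le. intros x Hx%in_seq. apply H. lia. Qed.

Lemma sum_from_to_nonneg f a b :
  (forall i, (a <= i <= b)%nat -> 0 <= f i) -> 0 <= sum_from_to f a b.
Proof.
  intros H. replace 0 with (sum_from_to (fun _ => 0) a b) at 1.
  - now apply sum_from_to_le.
  - unfold sum_from_to. induction (seq a (S b - a)); simpl; [|rewrite IHl]; ring.
Qed.

Lemma sum_from_to_ext f g a b :
  (forall i, (a <= i <= b)%nat -> f i = g i) -> sum_from_to f a b = sum_from_to g a b.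
Proof.
  intros H. unfold sum_from_to. f_equal. apply map_ext_in.
  intros x Hx%in_seq. apply H. lia.
Qed.

Lemma sum_from_to_scal c f a b :
  sum_from_to (fun i => c * f i) a b = c * sum_from_to f a b.
Proof. unfold sum_from_to. induction (seq a (S b - a)); simpl; [|rewrite IHl]; ring. Qed.

Lemma sum_from_to_S f a b :
  (a <= S b)%nat -> sum_from_to f a (S b) = sum_from_to f a b + f (S b).
Proof.
  intros Hab. unfold sum_from_to.
  replace (S (S b) - a)%nat with (S (S b - a)) by lia.
  rewrite seq_S, map_app, fold_right_app.
  replace (a + (S b - a))%nat with (S b) by lia.
  generalize (map f (seq a (S b - a))) as l. simpl.
  induction l as [|x l IH]; simpl; [|rewrite IH]; ring.
Qed.

Lemma sum_half_pow s : sum_from_to (fun u => (1/2) ^ u) 1 s = 1 - (1/2) ^ s.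
Proof.
  induction s as [|s IH]; [unfold sum_from_to; simpl; lra|].
  rewrite sum_from_to_S, IH by lia. simpl. field.
Qed.

(* [(-1)^t binom(-3/2, t) = (3/2)_t / t!] *)
Definition bcoef (t : nat) : R := (-1) ^ t * gbinom (-3/2) t.

Lemma bcoef_0 : bcoef 0 = 1.
Proof. unfold bcoef, gbinom. simpl. field. Qed.

Lemma bcoef_S t : bcoef (S t) = bcoef t * (INR t + 3/2) / (INR t + 1).
Proof.
  unfold bcoef, gbinom.
  fold (prod_upto (fun i => -3/2 - INR i) (S t)) (prod_upto (fun i => -3/2 - INR i) t).
  rewrite prod_upto_S, fact_simpl, mult_INR, S_INR.
  pose proof (INR_fact_neq_0 t). pose proof (pos_INR t).
  simpl. field. lra.
Qed.

Lemma bcoef_pos t : 0 < bcoef t.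
Proof.
  induction t as [|t IH]; [rewrite bcoef_0; lra|].
  rewrite bcoef_S. pose proof (pos_INR t).
  apply Rdiv_lt_0_compat; [apply Rmult_lt_0_compat|]; lra.
Qed.

(* The ratio of consecutive squares is [((t+3/2)/(t+1))^2 <= (2t+3)/(2t+1)]. *)
Lemma bcoef_sq_le t : bcoef t ^ 2 <= 2 * INR t + 1.
Proof.
  induction t as [|t IH]; [rewrite bcoef_0; simpl; lra|].
  rewrite bcoef_S, S_INR. pose proof (pos_INR t).
  set (b := bcoef t) in *. set (x := INR t) in *.
  replace ((b * (x + 3/2) / (x + 1)) ^ 2) with (b ^ 2 * (x + 3/2) ^ 2 / (x + 1) ^ 2)
    by (field; lra).
  apply Rmult_le_reg_r with ((x + 1) ^ 2); [nra|].
  unfold Rdiv. rewrite Rmult_assoc, Rinv_l by nra. rewrite Rmult_1_r.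
  apply Rle_trans with ((2 * x + 1) * (x + 3/2) ^ 2); [apply Rmult_le_compat_r; nra | nra].
Qed.

Lemma bcoef_le_sqrt t : bcoef t <= sqrt (2 * INR t + 1).
Proof.
  rewrite <- (sqrt_pow2 (bcoef t)) by (apply Rlt_le, bcoef_pos).
  apply sqrt_le_1_alt, bcoef_sq_le.
Qed.

(* [(-1)^s (1/2 - s)_(s+1) = (1/2) (1/2) (3/2) ... (s - 1/2)] *)
Definition acoef (s : nat) : R := (-1) ^ s * rising (1/2 - INR s) (S s).

Lemma acoef_0 : acoef 0 = 1/2.
Proof. unfold acoef, rising. simpl. ring. Qed.

Lemma acoef_S s : acoef (S s) = (INR s + 1/2) * acoef s.
Proof.
  unfold acoef, rising.
  fold (prod_upto (fun i => 1/2 - INR (S s) + INR i) (S (S s)))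
       (prod_upto (fun i => 1/2 - INR s + INR i) (S s)).
  rewrite prod_upto_shift.
  rewrite (prod_upto_ext (fun i => 1/2 - INR (S s) + INR (S i)) (fun i => 1/2 - INR s + INR i))
    by (intros i; rewrite !S_INR; ring).
  rewrite S_INR. simpl. field.
Qed.

Definition ccoef (s : nat) : R := acoef s / INR (fact s).

Lemma ccoef_S s : ccoef (S s) = ccoef s * (INR s + 1/2) / (INR s + 1).
Proof.
  unfold ccoef. rewrite acoef_S, fact_simpl, mult_INR, S_INR.
  pose proof (INR_fact_neq_0 s). pose proof (pos_INR s). field. lra.
Qed.

Lemma ccoef_pos s : 0 < ccoef s.
Proof.
  induction s as [|s IH]; [unfold ccoef; rewrite acoef_0; simpl; lra|].
  rewrite ccoef_S. pose proof (pos_INR s).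
  apply Rdiv_lt_0_compat; [apply Rmult_lt_0_compat|]; lra.
Qed.

Lemma acoef_nonneg s : 0 <= acoef s.
Proof.
  pose proof (ccoef_pos s) as Hc. pose proof (INR_fact_lt_0 s). unfold ccoef in Hc.
  replace (acoef s) with (acoef s / INR (fact s) * INR (fact s)) by (field; lra). nra.
Qed.

(* Telescoping: [c_(s+1)/(s+1) <= c_s/(s+1) = 2 (c_s - c_(s+1))]. *)
Lemma sum_ccoef_div_le t : sum_from_to (fun s => ccoef s / INR s) 1 t <= 1 - 2 * ccoef t.
Proof.
  induction t as [|t IH]; [unfold sum_from_to, ccoef; rewrite acoef_0; simpl; lra|].
  rewrite sum_from_to_S by lia.
  assert (ccoef (S t) / INR (S t) <= 2 * (ccoef t - ccoef (S t))).
  { rewrite ccoef_S, S_INR. pose proof (ccoef_pos t). pose proof (pos_INR t).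
    apply Rmult_le_reg_r with ((INR t + 1) ^ 2); [nra|].
    replace (ccoef t * (INR t + 1/2) / (INR t + 1) / (INR t + 1) * (INR t + 1) ^ 2)
      with (ccoef t * (INR t + 1/2)) by (field; lra).
    replace (2 * (ccoef t - ccoef t * (INR t + 1/2) / (INR t + 1)) * (INR t + 1) ^ 2)
      with (ccoef t * (INR t + 1)) by (field; lra).
    nra. }
  lra.
Qed.

Lemma INR_fact_ge_1 m : 1 <= INR (fact m).
Proof. change 1 with (INR 1). apply le_INR. pose proof (lt_O_fact m). lia. Qed.

Lemma fact_mul_pow_le s u : INR (fact s) * INR s ^ u <= INR (fact (s + u)).
Proof.
  induction u as [|u IH]; [rewrite Nat.add_0_r; simpl; lra|].
  rewrite Nat.add_succ_r, fact_simpl, mult_INR, <- tech_pow_Rmult.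
  assert (INR s <= INR (S (s + u))) by (apply le_INR; lia).
  pose proof (pos_INR s). pose proof (INR_fact_lt_0 s).
  assert (0 <= INR s ^ u) by (apply pow_le; lra).
  replace (INR (fact s) * (INR s * INR s ^ u)) with (INR s * (INR (fact s) * INR s ^ u)) by ring.
  apply Rmult_le_compat; try lra. apply Rmult_le_pos; lra.
Qed.

Lemma sqrt_ge_1 x : 1 <= x -> 1 <= sqrt x.
Proof. intros Hx. rewrite <- sqrt_1 at 1. apply sqrt_le_1_alt. exact Hx. Qed.

Lemma PI_gt_3 : 3 < PI.
Proof. pose proof PI2_3_2. lra. Qed.

Lemma PI_sq_div_36_bound : 0 <= PI ^ 2 / 36 <= 1/2.
Proof. pose proof PI_4. pose proof PI_gt_3. split; nra. Qed.

Definition inner_term (s u : nat) : R :=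
  (-1) ^ u * rising (- INR s) u / (INR (fact (s + u)) * INR (fact (2 * u - 1)))
  * (PI ^ 2 / 36) ^ u.

Definition inner_sum (s : nat) : R := sum_from_to (inner_term s) 1 s.

(* [(-1)^u (-s)_u = s (s-1) ... (s-u+1)] lies in [[0, s^u]], and [s! s^u <= (s+u)!]. *)
Lemma inner_term_bound s u : (u <= s)%nat ->
  0 <= inner_term s u <= (1/2) ^ u / INR (fact s).
Proof.
  intros Hu. unfold inner_term, rising.
  fold (prod_upto (fun i => - INR s + INR i) u). rewrite prod_upto_opp.
  destruct (prod_upto_bound (fun i => - (- INR s + INR i)) (INR s) u) as [P0 Ps].
  { intros i Hi. assert (INR i <= INR s) by (apply le_INR; lia). pose proof (pos_INR i). lra. }
  set (P := prod_upto _ u) in *.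
  pose proof (fact_mul_pow_le s u). pose proof (INR_fact_lt_0 s).
  pose proof (INR_fact_ge_1 (s + u)). pose proof (INR_fact_ge_1 (2 * u - 1)).
  set (F := INR (fact (s + u))) in *. set (G := INR (fact (2 * u - 1))) in *.
  set (F0 := INR (fact s)) in *.
  pose proof PI_sq_div_36_bound.
  assert (0 <= (PI ^ 2 / 36) ^ u <= (1/2) ^ u) by (split; [apply pow_le | apply pow_incr]; lra).
  assert (HP : P / (F * G) <= / F0).
  { apply Rmult_le_reg_r with (F0 * F * G); [repeat apply Rmult_lt_0_compat; lra|].
    replace (P / (F * G) * (F0 * F * G)) with (F0 * P) by (field; lra).
    replace (/ F0 * (F0 * F * G)) with (F * G) by (field; lra).
    apply Rle_trans with F; nra. }
  assert (0 <= P / (F * G)) by (apply Rdiv_le_0_compat; nra).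
  split; [nra|].
  replace ((1/2) ^ u / F0) with (/ F0 * (1/2) ^ u) by (field; lra).
  apply Rmult_le_compat; lra.
Qed.

Lemma inner_sum_bound s : 0 <= inner_sum s <= / INR (fact s).
Proof.
  pose proof (INR_fact_lt_0 s). unfold inner_sum. split.
  - apply sum_from_to_nonneg. intros u Hu. apply inner_term_bound. lia.
  - apply Rle_trans with (sum_from_to (fun u => / INR (fact s) * (1/2) ^ u) 1 s).
    + apply sum_from_to_le. intros u Hu.
      rewrite Rmult_comm. apply inner_term_bound. lia.
    + rewrite sum_from_to_scal, sum_half_pow.
      assert (0 < (1/2) ^ s) by (apply pow_lt; lra).
      assert (0 < / INR (fact s)) by (apply Rinv_0_lt_compat; lra). nra.
Qed.

Definition Q (t : nat) : R :=
  sum_from_to (fun s => acoef s * bcoef (t - s) / INR s * inner_sum s) 1 t.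

Lemma S3_sign t : (-1) ^ t * S3 t = Q t.
Proof.
  unfold S3, Q. rewrite <- sum_from_to_scal. apply sum_from_to_ext.
  intros s Hs. unfold acoef, bcoef, inner_sum, inner_term.
  replace ((-1) ^ t) with ((-1) ^ s * (-1) ^ (t - s)) by (rewrite <- pow_add; f_equal; lia).
  generalize (rising (1/2 - INR s) (S s)) (gbinom (-3/2) (t - s)). intros x y.
  field. apply not_0_INR. lia.
Qed.

Lemma Q_summand_bound t s : (1 <= s <= t)%nat ->
  0 <= acoef s * bcoef (t - s) / INR s * inner_sum s <= ccoef s / INR s * sqrt (2 * INR t + 1).
Proof.
  intros Hs.
  pose proof (acoef_nonneg s). pose proof (bcoef_pos (t - s)). destruct (inner_sum_bound s).
  assert (Hb : bcoef (t - s) <= sqrt (2 * INR t + 1)).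
  { apply Rle_trans with (sqrt (2 * INR (t - s) + 1)); [apply bcoef_le_sqrt|].
    apply sqrt_le_1_alt. assert (INR (t - s) <= INR t) by (apply le_INR; lia). lra. }
  assert (Ha : acoef s * inner_sum s <= ccoef s) by (unfold ccoef, Rdiv; apply Rmult_le_compat_l; lra).
  assert (0 < / INR s) by (apply Rinv_0_lt_compat, lt_0_INR; lia).
  replace (acoef s * bcoef (t - s) / INR s * inner_sum s)
    with (acoef s * inner_sum s * / INR s * bcoef (t - s)) by (unfold Rdiv; ring).
  assert (0 <= acoef s * inner_sum s) by (apply Rmult_le_pos; lra).
  split; [apply Rmult_le_pos; [apply Rmult_le_pos|]; lra|].
  apply Rmult_le_compat; [apply Rmult_le_pos; lra | lra | | exact Hb].
  apply Rmult_le_compat_r; lra.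
Qed.

Lemma Q_bound t : 0 <= Q t <= sqrt (2 * INR t + 1).
Proof.
  unfold Q. split.
  - apply sum_from_to_nonneg. intros s Hs. apply Q_summand_bound. lia.
  - apply Rle_trans with (sum_from_to (fun s => sqrt (2 * INR t + 1) * (ccoef s / INR s)) 1 t).
    + apply sum_from_to_le. intros s Hs. rewrite (Rmult_comm (sqrt _)).
      apply Q_summand_bound. lia.
    + rewrite sum_from_to_scal.
      pose proof (sum_ccoef_div_le t). pose proof (ccoef_pos t). pose proof (sqrt_pos (2 * INR t + 1)).
      nra.
Qed.

Definition g_scale : R := 6 / (PI * sqrt 24).

Lemma g_scale_pos : 0 < g_scale.
Proof.
  unfold g_scale. pose proof PI_gt_3. assert (0 < sqrt 24) by (apply sqrt_lt_R0; lra).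
  apply Rdiv_lt_0_compat; nra.
Qed.

Lemma g_o1_eq t : (2 <= t)%nat -> g_o1 t = - (g_scale / 24 ^ t) * (bcoef t + Q t).
Proof.
  intros Ht. destruct t as [|[|t]]; [lia | lia |].
  change (g_o1 (S (S t))) with
    (- 6 / (PI * sqrt 24) * ((-1) ^ S (S t) / 24 ^ S (S t)) * (gbinom (-3/2) (S (S t)) + S3 (S (S t)))).
  rewrite <- S3_sign. unfold bcoef, g_scale.
  pose proof PI_gt_3. assert (0 < sqrt 24) by (apply sqrt_lt_R0; lra).
  assert (0 < 24 ^ S (S t)) by (apply pow_lt; lra).
  field. lra.
Qed.

Definition gmaj (t : nat) : R := 2 * g_scale * sqrt (2 * INR t + 1) / 24 ^ t.

Lemma g_o1_bound t : (1 <= t)%nat -> - gmaj t <= g_o1 t < 0.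
Proof.
  intros Ht. pose proof g_scale_pos. pose proof PI_gt_3.
  unfold gmaj. destruct (Nat.eq_dec t 1) as [->|Ht2].
  - assert (E : g_o1 1 = - (g_scale / 24) * ((432 + PI ^ 2) / 288)).
    { assert (s24 : sqrt 24 = 2 * sqrt 6).
      { replace 24 with (2 * 2 * 6) by lra. rewrite sqrt_mult, sqrt_square by lra. ring. }
      assert (0 < sqrt 6) by (apply sqrt_lt_R0; lra).
      change (g_o1 1) with (- (432 + PI ^ 2) / (2304 * sqrt 6 * PI)).
      unfold g_scale. rewrite s24. field. lra. }
    assert (1 <= sqrt (2 * INR 1 + 1)).
    { apply sqrt_ge_1. simpl. lra. }
    pose proof PI_4.
    assert (PI ^ 2 <= 16) by nra.
    assert (0 < g_scale / 24) by lra.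
    rewrite E. replace (- (2 * g_scale * sqrt (2 * INR 1 + 1) / 24 ^ 1))
      with (- (g_scale / 24) * (2 * sqrt (2 * INR 1 + 1))) by (simpl; field).
    split; nra.
  - rewrite g_o1_eq by lia.
    pose proof (bcoef_pos t). pose proof (bcoef_le_sqrt t). pose proof (Q_bound t).
    assert (0 < g_scale / 24 ^ t) by (apply Rdiv_lt_0_compat; [lra | apply pow_lt; lra]).
    replace (- (2 * g_scale * sqrt (2 * INR t + 1) / 24 ^ t))
      with (- (g_scale / 24 ^ t) * (2 * sqrt (2 * INR t + 1))) by (field; apply pow_nonzero; lra).
    split; nra.
Qed.

(* From [1 + j <= 2^j]: the factor [sqrt (2t+1)] at most doubles per step, against [24]. *)
Lemma gmaj_shift k j : gmaj (k + j) <= gmaj k * (/ 12) ^ j.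
Proof.
  assert (Hsq : sqrt (2 * INR (k + j) + 1) <= sqrt (2 * INR k + 1) * 2 ^ j).
  { assert (1 + INR j <= 2 ^ j).
    { induction j as [|j IH]; [simpl; lra|].
      rewrite S_INR, <- tech_pow_Rmult. pose proof (pos_INR j). lra. }
    pose proof (pos_INR j). pose proof (pos_INR k).
    assert (2 ^ j * 2 ^ j >= 1 + 2 * INR j) by nra.
    rewrite <- (sqrt_square (2 ^ j)) by lra.
    rewrite <- sqrt_mult by nra. apply sqrt_le_1_alt. rewrite plus_INR. nra. }
  unfold gmaj. pose proof g_scale_pos.
  rewrite pow_inv, pow_add.
  replace (24 ^ j) with (2 ^ j * 12 ^ j) by (rewrite <- Rpow_mult_distr; f_equal; lra).
  assert (0 < 2 ^ j) by (apply pow_lt; lra). assert (0 < 12 ^ j) by (apply pow_lt; lra).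
  assert (0 < 24 ^ k) by (apply pow_lt; lra).
  apply Rmult_le_reg_r with (24 ^ k * (2 ^ j * 12 ^ j)); [repeat apply Rmult_lt_0_compat; lra|].
  replace (2 * g_scale * sqrt (2 * INR (k + j) + 1) / (24 ^ k * (2 ^ j * 12 ^ j))
           * (24 ^ k * (2 ^ j * 12 ^ j)))
    with (2 * g_scale * sqrt (2 * INR (k + j) + 1)) by (field; lra).
  replace (2 * g_scale * sqrt (2 * INR k + 1) / 24 ^ k * / 12 ^ j * (24 ^ k * (2 ^ j * 12 ^ j)))
    with (2 * g_scale * (sqrt (2 * INR k + 1) * 2 ^ j)) by (field; lra).
  apply Rmult_le_compat_l; lra.
Qed.

Lemma halfpow_pos x t : 0 < halfpow x t.
Proof. apply exp_pos. Qed.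

Lemma halfpow_le x k j : 1 <= x -> halfpow x k <= halfpow x (k + j).
Proof.
  intros Hx. apply Rle_Rpower; [exact Hx|].
  rewrite plus_INR. pose proof (pos_INR j). lra.
Qed.

Lemma halfpow_24 k : halfpow 24 k = 24 ^ k * sqrt 24.
Proof.
  unfold halfpow. replace ((2 * INR k + 1) / 2) with (INR k + / 2) by field.
  rewrite Rpower_plus, Rpower_pow, Rpower_sqrt by lra. reflexivity.
Qed.

Lemma g_o1_term_bound x k j : 1 <= x -> (1 <= k)%nat ->
  - (gmaj k / halfpow x k * (/ 12) ^ j) <= g_o1 (k + j) / halfpow x (k + j) < 0.
Proof.
  intros Hx Hk.
  destruct (g_o1_bound (k + j)) as [Hlo Hneg]; [lia|].
  pose proof (gmaj_shift k j). pose proof (halfpow_le x k j Hx).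
  pose proof (halfpow_pos x k). pose proof (halfpow_pos x (k + j)).
  set (h := halfpow x k) in *. set (h' := halfpow x (k + j)) in *.
  set (g := g_o1 (k + j)) in *.
  split.
  - apply Rle_trans with (g / h).
    + replace (- (gmaj k / h * (/ 12) ^ j)) with (- (gmaj k * (/ 12) ^ j) / h) by (field; lra).
      unfold Rdiv. apply Rmult_le_compat_r; [apply Rlt_le, Rinv_0_lt_compat|]; lra.
    + unfold Rdiv. apply Rmult_le_compat_neg_l; [lra|]. apply Rinv_le_contravar; lra.
  - apply Rdiv_neg_pos; lra.
Qed.

Lemma Series_nonneg a : ex_series a -> (forall n, 0 <= a n) -> 0 <= Series a.
Proof.
  intros Ha Hpos.
  replace 0 with (Series (fun n => 0 * a n)) by (rewrite Series_scal_l; ring).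
  apply Series_le; [intros n; specialize (Hpos n); lra | exact Ha].
Qed.

Lemma is_series_neg_geom_bound (a : nat -> R) (C q : R) :
  0 <= q < 1 -> (forall j, - (C * q ^ j) <= a j < 0) ->
  exists l, is_series a l /\ - (C / (1 - q)) <= l < 0.
Proof.
  intros Hq Ha.
  set (b := fun j => - a j).
  assert (Hgeom : is_series (fun j => C * q ^ j) (C / (1 - q))).
  { apply (is_series_scal_l C (fun j => q ^ j)). apply is_series_geom.
    rewrite Rabs_pos_eq; lra. }
  assert (Hb : ex_series b).
  { apply (ex_series_le (K := R_AbsRing) (V := R_CompleteNormedModule) b (fun j => C * q ^ j)).
    - intros j. change (norm (b j)) with (Rabs (- a j)). specialize (Ha j).
      rewrite Rabs_pos_eq; lra.
    - eexists. exact Hgeom. }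
  exists (- Series b). split; [|split].
  - apply (is_series_ext (fun j => - b j)); [intros j; apply Ropp_involutive|].
    apply (is_series_opp b). apply Series_correct, Hb.
  - apply Ropp_le_contravar. rewrite <- (is_series_unique _ _ Hgeom).
    apply Series_le; [intros j; specialize (Ha j); unfold b; lra | eexists; exact Hgeom].
  - rewrite Series_incr_1 by exact Hb.
    assert (0 <= Series (fun j => b (S j))).
    { apply Series_nonneg; [apply (ex_series_incr_1 b), Hb | intros j; specialize (Ha (S j)); unfold b; lra]. }
    specialize (Ha 0%nat). unfold b at 1. lra.
Qed.

Lemma cosh_ge_1 x : 1 <= cosh x.
Proof. unfold cosh. pose proof (exp_ineq1_le x). pose proof (exp_ineq1_le (- x)). lra. Qed.

Lemma alpha_sinh_bound : 0 < alpha * sinh alpha <= 1.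
Proof.
  unfold alpha. pose proof PI_gt_3. pose proof PI_4.
  assert (0 < sinh (PI / 6)) by (rewrite <- sinh_0; apply sinh_lt; lra).
  assert (exp (PI / 6) <= 3).
  { apply Rle_trans with (exp 1); [apply Rlt_le, exp_increasing; lra | apply exp_le_3]. }
  assert (sinh (PI / 6) <= 3 / 2) by (unfold sinh; pose proof (exp_pos (- (PI / 6))); lra).
  split; nra.
Qed.

(* The [-109/10 cosh(alpha) sqrt(k+1)] term dominates the geometric bound [(12/11) gmaj k]. *)
Lemma L3_lt_geom_bound k : L3 k < - (gmaj k / (1 - / 12)).
Proof.
  unfold L3, gmaj, g_scale. rewrite halfpow_24.
  pose proof PI_gt_3. pose proof alpha_sinh_bound. pose proof (cosh_ge_1 alpha).
  pose proof (pos_INR k).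
  assert (s24 : 0 < sqrt 24) by (apply sqrt_lt_R0; lra).
  assert (p24 : 0 < 24 ^ k) by (apply pow_lt; lra).
  set (r := sqrt (INR k + 1)).
  assert (Hr : 1 <= r) by (apply sqrt_ge_1; lra).
  assert (Hsq : sqrt (2 * INR k + 1) <= 2 * r).
  { unfold r. rewrite <- (sqrt_pow2 2) at 2 by lra. rewrite <- sqrt_mult by lra.
    apply sqrt_le_1_alt. lra. }
  set (sq := sqrt (2 * INR k + 1)) in *.
  assert (Hpi : sq / PI <= 2 * r / 3).
  { apply Rmult_le_reg_r with (3 * PI); [lra|].
    replace (sq / PI * (3 * PI)) with (3 * sq) by (field; lra).
    replace (2 * r / 3 * (3 * PI)) with (2 * r * PI) by field. nra. }
  replace (- (2 * (6 / (PI * sqrt 24)) * sq / 24 ^ k / (1 - / 12)))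
    with (- (144 / 11 * (sq / PI)) / (24 ^ k * sqrt 24)) by (field; lra).
  unfold Rdiv at 1 3. apply Rmult_lt_compat_r; [apply Rinv_0_lt_compat; nra|].
  assert (0 < 23 / (10 * r)) by (apply Rdiv_lt_0_compat; lra).
  nra.
Qed.

Lemma U3_pos k : 0 < U3 k.
Proof.
  unfold U3. pose proof alpha_sinh_bound.
  assert (0 < sqrt (INR k + 1)) by (apply sqrt_lt_R0; pose proof (pos_INR k); lra).
  assert (0 < 33 / (10 * sqrt (INR k + 1))) by (apply Rdiv_lt_0_compat; lra).
  apply Rdiv_lt_0_compat; [lra | apply halfpow_pos].
Qed.

Theorem mainTheorem18 (n k : nat) (hn : (1 <= n)%nat) (hk : (1 <= k)%nat) :
  exists l : R,
    is_series (fun j : nat => g_o1 (k + j) / halfpow (INR n) (k + j)) l /\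
    L3 k / halfpow (INR n) k < l /\ l < U3 k / halfpow (INR n) k.
Proof.
  assert (Hn : 1 <= INR n) by (apply (le_INR 1); exact hn).
  set (H := halfpow (INR n) k).
  assert (HH : 0 < H) by apply halfpow_pos.
  destruct (is_series_neg_geom_bound (fun j => g_o1 (k + j) / halfpow (INR n) (k + j))
              (gmaj k / H) (/ 12)) as [l [Hl [Hlo Hhi]]].
  - lra.
  - intros j. apply g_o1_term_bound; assumption.
  exists l. split; [exact Hl | split].
  - apply Rlt_le_trans with (- (gmaj k / H / (1 - / 12))); [|exact Hlo].
    replace (- (gmaj k / H / (1 - / 12))) with (- (gmaj k / (1 - / 12)) / H) by (field; lra).
    unfold Rdiv. apply Rmult_lt_compat_r; [apply Rinv_0_lt_compat, HH | apply L3_lt_geom_bound].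
  - pose proof (U3_pos k). apply Rlt_trans with 0; [exact Hhi | apply Rdiv_lt_0_compat; lra].
Qed.
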